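(* Let $f,g\in\mathcal{H}$ with $f\neq g$ as germs. Then there is no real $M>0$ such that $|f(x)|\le M|g(x)|$ and $|g(x)|\le M|f(x)|$ hold for all sufficiently large $x$.
   Context: All functions are real-valued functions defined on some interval $(a,\infty)$. Two such functions are identified if they agree for all sufficiently large $x$; these equivalence classes are germs at $+\infty$. Write $\ln^{(k)}$ for the $k$-fold iterated natural logarithm, with $\ln^{(0)}(x)=x$. Let $\mathcal{H}$ be the smallest set of germs at $+\infty$ satisfying: (i) $\ln^{(k)}\in\mathcal{H}$ for every integer $k\ge0$; (ii) if $f\in\mathcal{H}$, then $\exp\circ f\in\mathcal{H}$, and if moreover $f$ is eventually positive, then $f^\alpha\in\mathcal{H}$ for every real $\alpha>0$; (iii) if $f,g\in\mathcal{H}$ and $f\ne g$ (as germs), then $fg\in\mathcal{H}$; (iv) if $f,g\in\mathcal{H}$ and $f(x)/g(x)\to+\infty$, then $f/g\in\mathcal{H}$. Two functions $f,g$ lie in the same Archimedean class (''commutative big O'', $f=O(g)$) if there is $M>0$ with $|f(x)|\le M|g(x)|$ and $|g(x)|\le M|f(x)|$ for all large $x$. *)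

From Stdlib Require Import Reals.
Open Scope R_scope.

(* Germs at +oo are represented by total functions R -> R; a property holds
   "eventually" if it holds on some interval (a, +oo). *)
Definition eventually (P : R -> Prop) : Prop :=
  exists a : R, forall x : R, a < x -> P x.

Definition germ_eq (f g : R -> R) : Prop :=
  eventually (fun x => f x = g x).

Definition tends_to_pinfty (f : R -> R) : Prop :=
  forall B : R, eventually (fun x => B < f x).

Fixpoint iter_ln (k : nat) (x : R) : R :=
  match k with
  | O => x
  | S k' => ln (iter_ln k' x)
  end.

(* The class H: smallest set of germs closed under the rules (i)-(iv).
   Since elements are germs, membership is invariant under germ equality
   (rule H_germ). *)
Inductive inH : (R -> R) -> Prop :=
  | H_germ : forall f g, inH f -> germ_eq f g -> inH g
  | H_ln : forall k : nat, inH (iter_ln k)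
  | H_exp : forall f, inH f -> inH (fun x => exp (f x))
  | H_pow : forall f (alpha : R), inH f -> eventually (fun x => 0 < f x) ->
      0 < alpha -> inH (fun x => Rpower (f x) alpha)
  | H_mul : forall f g, inH f -> inH g -> ~ germ_eq f g ->
      inH (fun x => f x * g x)
  | H_div : forall f g, inH f -> inH g ->
      tends_to_pinfty (fun x => f x / g x) ->
      inH (fun x => f x / g x).

(* Stratify germs into levels: level 0 consists of the iterated logarithms, and level
   n+1 of the germs tending to +oo whose logarithm is a finite linear combination of
   level-n germs.  Every level is pairwise comparable: two of its germs are equal or
   one is o(the other).  For level 0 this is the scale ln^(k+1) = o(ln^(k)).  For
   level n+1, ln f - ln g is a combination of level-n germs; over a pairwise comparable
   family of positive germs such a combination vanishes eventually or has a leading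
   term c h + o(h), hence vanishes eventually or tends to +oo or -oo, and so f = g,
   g = o(f) or f = o(g).
   Finally, rules (i)-(iv) defining H keep us inside the levels, so two distinct
   members of H are comparable but not germ-equal, hence one is o(the other), which
   excludes a two-sided bound |f| <= M |g|, |g| <= M |f|. *)

From Stdlib Require Import Reals Lra Lia Classical Wf_nat.
Open Scope R_scope.

Lemma ev_mono (P Q : R -> Prop) :
  eventually P -> (forall x, P x -> Q x) -> eventually Q.
Proof. intros [a Ha] H; exists a; auto. Qed.

Lemma ev_and (P Q : R -> Prop) :
  eventually P -> eventually Q -> eventually (fun x => P x /\ Q x).
Proof.
  intros [a Ha] [b Hb]; exists (Rmax a b); intros x Hx.
  pose proof (Rmax_l a b); pose proof (Rmax_r a b); split; [apply Ha | apply Hb]; lra.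
Qed.

Lemma ev_mono2 (P Q S : R -> Prop) : eventually P -> eventually Q ->
  (forall x, P x -> Q x -> S x) -> eventually S.
Proof. intros HP HQ H; apply (ev_mono _ _ (ev_and _ _ HP HQ)); intros x []; auto. Qed.

Lemma ev_mono3 (P Q T S : R -> Prop) : eventually P -> eventually Q -> eventually T ->
  (forall x, P x -> Q x -> T x -> S x) -> eventually S.
Proof. intros HP HQ HT H; apply (ev_mono2 _ _ _ (ev_and _ _ HP HQ) HT); intros x []; auto. Qed.

Lemma ev_False : ~ eventually (fun _ => False).
Proof. intros [a Ha]; apply (Ha (a + 1)); lra. Qed.

Lemma germ_ext (f g : R -> R) : (forall x, f x = g x) -> germ_eq f g.
Proof. intros H; exists 0; auto. Qed.

Lemma germ_sym (f g : R -> R) : germ_eq f g -> germ_eq g f.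
Proof. intros H; apply (ev_mono _ _ H); auto. Qed.

Lemma germ_trans (f g h : R -> R) : germ_eq f g -> germ_eq g h -> germ_eq f h.
Proof. intros H1 H2; apply (ev_mono2 _ _ _ H1 H2); intros; congruence. Qed.

Lemma tends_pos (f : R -> R) : tends_to_pinfty f -> eventually (fun x => 0 < f x).
Proof. intros H; apply H. Qed.

Lemma tends_germ (f g : R -> R) : tends_to_pinfty f -> germ_eq f g -> tends_to_pinfty g.
Proof. intros H E B; apply (ev_mono2 _ _ _ (H B) E); intros x ? <-; auto. Qed.

Lemma tends_ext (f g : R -> R) : tends_to_pinfty f -> (forall x, f x = g x) -> tends_to_pinfty g.
Proof. intros H E; apply (tends_germ f); auto using germ_ext. Qed.

Lemma tends_ln (f : R -> R) : tends_to_pinfty f -> tends_to_pinfty (fun x => ln (f x)).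
Proof.
  intros H B; apply (ev_mono _ _ (H (exp B))); intros x Hx.
  rewrite <- (ln_exp B) at 1; apply ln_increasing; auto using exp_pos.
Qed.

Lemma tends_exp (f : R -> R) : tends_to_pinfty f -> tends_to_pinfty (fun x => exp (f x)).
Proof.
  intros H B; apply (ev_mono _ _ (H B)); intros x Hx.
  pose proof (exp_ineq1_le (f x)); lra.
Qed.

Lemma tends_scale (a : R) (f : R -> R) :
  0 < a -> tends_to_pinfty f -> tends_to_pinfty (fun x => a * f x).
Proof.
  intros Ha H B; apply (ev_mono _ _ (H (B / a))); intros x Hx.
  assert (a * (B / a) = B) by (field; lra); nra.
Qed.

Lemma tends_mul (f g : R -> R) :
  tends_to_pinfty f -> tends_to_pinfty g -> tends_to_pinfty (fun x => f x * g x).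
Proof.
  intros Hf Hg B; apply (ev_mono2 _ _ _ (Hf 1) (Hg (Rabs B))); intros x H1 H2.
  pose proof (Rle_abs B); pose proof (Rabs_pos B); nra.
Qed.

Lemma tends_Rpower (f : R -> R) (a : R) :
  0 < a -> tends_to_pinfty f -> tends_to_pinfty (fun x => Rpower (f x) a).
Proof. intros Ha H; apply tends_exp, tends_scale, tends_ln; auto. Qed.

Lemma iter_ln_tends (k : nat) : tends_to_pinfty (iter_ln k).
Proof.
  induction k as [|k IH]; simpl.
  - intros B; exists B; auto.
  - apply (tends_ln (iter_ln k)); auto.
Qed.

(** * Negligibility: [a = o(b)] at +oo *)

Definition negligible (a b : R -> R) : Prop :=
  forall eps, 0 < eps -> eventually (fun x => Rabs (a x) <= eps * b x).

Lemma negligible_germ (a b a' b' : R -> R) :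
  negligible a b -> germ_eq a a' -> germ_eq b b' -> negligible a' b'.
Proof.
  intros H Ha Hb eps He; apply (ev_mono3 _ _ _ _ (H eps He) Ha Hb); intros x ? <- <-; auto.
Qed.

Lemma negligible_trans (a b c : R -> R) : negligible a b -> negligible b c -> negligible a c.
Proof.
  intros H1 H2 eps He; apply (ev_mono2 _ _ _ (H1 1 ltac:(lra)) (H2 eps He)).
  intros x ? ?; pose proof (Rle_abs (b x)); lra.
Qed.

Lemma negligible_add (a b h : R -> R) :
  negligible a h -> negligible b h -> negligible (fun x => a x + b x) h.
Proof.
  intros Ha Hb eps He; apply (ev_mono2 _ _ _ (Ha (eps / 2) ltac:(lra)) (Hb (eps / 2) ltac:(lra))).
  intros x ? ?; pose proof (Rabs_triang (a x) (b x)); lra.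
Qed.

Lemma negligible_scale (c : R) (a h : R -> R) :
  negligible a h -> negligible (fun x => c * a x) h.
Proof.
  intros Ha eps He; set (k := Rabs c + 1).
  assert (Hk : 0 < k) by (unfold k; pose proof (Rabs_pos c); lra).
  apply (ev_mono _ _ (Ha (eps / k) ltac:(apply Rdiv_lt_0_compat; lra))); intros x Hx.
  assert (E : k * (eps / k * h x) = eps * h x) by (field; lra).
  pose proof (Rabs_pos (a x)); pose proof (Rabs_pos c).
  assert (Rabs c * Rabs (a x) <= k * (eps / k * h x)) by (unfold k in *; nra).
  rewrite Rabs_mult; lra.
Qed.

Lemma negligible_zero (a h : R -> R) :
  eventually (fun x => a x = 0) -> eventually (fun x => 0 < h x) -> negligible a h.
Proof.
  intros Ha Hh eps He; apply (ev_mono2 _ _ _ Ha Hh); intros x -> ?.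
  rewrite Rabs_R0; nra.
Qed.

Lemma negligible_comp (a b h : R -> R) : negligible a b -> tends_to_pinfty h ->
  negligible (fun x => a (h x)) (fun x => b (h x)).
Proof.
  intros Hab Hh eps He; destruct (Hab eps He) as [Y HY].
  apply (ev_mono _ _ (Hh Y)); auto.
Qed.

Lemma negligible_not_bounded (f g : R -> R) (M : R) :
  0 < M -> negligible f g -> eventually (fun x => 0 < g x) ->
  ~ eventually (fun x => Rabs (g x) <= M * Rabs (f x)).
Proof.
  intros HM Hfg Hg Hb; apply ev_False.
  apply (ev_mono3 _ _ _ _ (Hfg (/ (2 * M)) ltac:(apply Rinv_0_lt_compat; lra)) Hg Hb).
  intros x Hf Hgx Hgf; rewrite Rabs_pos_eq in Hgf by lra.
  assert (E : M * / (2 * M) = / 2) by (field; lra); nra.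
Qed.

(** * Iterated logarithms form a scale *)

Lemma ln_le_pred (y : R) : 0 < y -> ln y <= y - 1.
Proof. intros Hy; pose proof (exp_ineq1_le (ln y)); rewrite exp_ln in H; lra. Qed.

(* [ln y = 2 ln (sqrt y) < 2 sqrt y <= eps y] once [sqrt y >= 2 / eps]. *)
Lemma ln_negligible : negligible ln (fun y => y).
Proof.
  intros eps He; set (t := 2 / eps).
  assert (Ht : 0 < t) by (unfold t; apply Rdiv_lt_0_compat; lra).
  exists (t * t + 1); intros y Hy.
  assert (Hy0 : 0 < y) by nra.
  set (s := sqrt y); assert (Hs : 0 < s) by (apply sqrt_lt_R0; auto).
  assert (Hss : s * s = y) by (apply sqrt_sqrt; lra).
  assert (Htt : 0 <= t * t) by nra.
  assert (Hts : t <= s).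
  { destruct (Rle_or_lt t s) as [?|Hst]; auto.
    assert (s * s <= t * t) by (apply Rmult_le_compat; lra); lra. }
  assert (Hln : 0 <= ln y) by (rewrite <- ln_1; apply Rlt_le, ln_increasing; lra).
  rewrite Rabs_pos_eq by lra; rewrite <- Hss, ln_mult by auto.
  pose proof (ln_le_pred s Hs).
  assert (E : eps * t = 2) by (unfold t; field; lra).
  assert (eps * t * s <= eps * (s * s))
    by (rewrite Rmult_assoc; apply Rmult_le_compat_l; nra).
  rewrite E in *; lra.
Qed.

Lemma iter_ln_negligible (j k : nat) : (j < k)%nat -> negligible (iter_ln k) (iter_ln j).
Proof.
  induction 1 as [|k _ IH].
  - exact (negligible_comp ln (fun y => y) _ ln_negligible (iter_ln_tends j)).
  - apply (negligible_trans _ (iter_ln k)); auto.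
    exact (negligible_comp ln (fun y => y) _ ln_negligible (iter_ln_tends k)).
Qed.

Fixpoint lincomb (P : (R -> R) -> Prop) (n : nat) (v : R -> R) : Prop :=
  match n with
  | O => eventually (fun x => v x = 0)
  | S n' => exists g c w, P g /\ lincomb P n' w /\
      eventually (fun x => v x = c * g x + w x)
  end.

Lemma lincomb_germ (P : (R -> R) -> Prop) (n : nat) (v w : R -> R) :
  lincomb P n v -> eventually (fun x => v x = w x) -> lincomb P n w.
Proof.
  destruct n as [|n]; simpl.
  - intros H1 H2; apply (ev_mono2 _ _ _ H1 H2); intros; lra.
  - intros (g & c & u & Hg & Hu & He) H2; exists g, c, u; repeat split; auto.
    apply (ev_mono2 _ _ _ He H2); intros; lra.
Qed.

Lemma lincomb_mono (P Q : (R -> R) -> Prop) (n : nat) (v : R -> R) :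
  (forall g, P g -> Q g) -> lincomb P n v -> lincomb Q n v.
Proof.
  intros HPQ; revert v; induction n as [|n IH]; simpl; auto.
  intros v (g & c & u & Hg & Hu & He); exists g, c, u; auto.
Qed.

Lemma lincomb_single (P : (R -> R) -> Prop) (g : R -> R) : P g -> lincomb P 1 g.
Proof.
  intros Hg; exists g, 1, (fun _ => 0); repeat split; auto.
  - exists 0; auto.
  - exists 0; intros; ring.
Qed.

Lemma lincomb_scale (P : (R -> R) -> Prop) (n : nat) (v : R -> R) (a : R) :
  lincomb P n v -> lincomb P n (fun x => a * v x).
Proof.
  revert v; induction n as [|n IH]; simpl.
  - intros v H; apply (ev_mono _ _ H); intros x ->; ring.
  - intros v (g & c & u & Hg & Hu & He).
    exists g, (a * c), (fun x => a * u x); repeat split; auto.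
    apply (ev_mono _ _ He); intros x ->; ring.
Qed.

Lemma lincomb_add (P : (R -> R) -> Prop) (n m : nat) (v w : R -> R) :
  lincomb P n v -> lincomb P m w -> lincomb P (n + m) (fun x => v x + w x).
Proof.
  revert v; induction n as [|n IH]; simpl.
  - intros v H Hw; apply (lincomb_germ _ _ _ _ Hw).
    apply (ev_mono _ _ H); intros x ->; ring.
  - intros v (g & c & u & Hg & Hu & He) Hw.
    exists g, c, (fun x => u x + w x); repeat split; auto.
    apply (ev_mono _ _ He); intros x ->; ring.
Qed.

Lemma lincomb_combine (P : (R -> R) -> Prop) (n m : nat) (v w : R -> R) (a b : R) :
  lincomb P n v -> lincomb P m w -> lincomb P (n + m) (fun x => a * v x + b * w x).
Proof. intros Hv Hw; apply lincomb_add; apply lincomb_scale; auto. Qed.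

Lemma lincomb_isolate (P : (R -> R) -> Prop) (n : nat) (g v : R -> R) :
  lincomb P n v -> exists a m w', (m <= n)%nat /\
    lincomb (fun p => P p /\ ~ germ_eq p g) m w' /\
    eventually (fun x => v x = a * g x + w' x).
Proof.
  revert v; induction n as [|n IH]; simpl.
  - intros v H; exists 0, 0%nat, v; repeat split; auto.
    exists 0; intros; ring.
  - intros v (p & c & u & Hp & Hu & He).
    destruct (IH u Hu) as (a & m & w' & Hm & Hw' & Hue).
    destruct (classic (germ_eq p g)) as [Hpg | Hpg].
    + exists (c + a), m, w'; repeat split; auto.
      apply (ev_mono3 _ _ _ _ He Hue Hpg); intros x -> -> ->; ring.
    + exists a, (S m), (fun x => c * p x + w' x); repeat split; [lia| |].
      * exists p, c, w'; repeat split; auto. exists 0; intros; ring.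
      * apply (ev_mono2 _ _ _ He Hue); intros x -> ->; ring.
Qed.

(** * Leading terms of linear combinations *)

Definition asymp (v : R -> R) (c : R) (h : R -> R) : Prop :=
  negligible (fun x => v x - c * h x) h.

Lemma asymp_germ (v v' h : R -> R) (c : R) :
  asymp v c h -> germ_eq v v' -> asymp v' c h.
Proof.
  intros H E; apply (negligible_germ _ _ _ _ H); [|exists 0; auto].
  apply (ev_mono _ _ E); intros x ->; auto.
Qed.

Lemma asymp_negligible (w h g : R -> R) (d : R) :
  asymp w d h -> negligible h g -> negligible w g.
Proof.
  intros Hw Hhg.
  apply (negligible_germ (fun x => (w x - d * h x) + d * h x) g); [| |exists 0; auto].
  - apply negligible_add; [apply (negligible_trans _ h)|apply negligible_scale]; auto.
  - apply germ_ext; intros; ring.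
Qed.

Lemma asymp_dominant (w g : R -> R) (C : R) :
  negligible w g -> asymp (fun x => C * g x + w x) C g.
Proof.
  intros H; apply (negligible_germ _ _ _ _ H); [apply germ_ext; intros; ring|exists 0; auto].
Qed.

Lemma asymp_add_negligible (w g h : R -> R) (C d : R) :
  asymp w d h -> negligible g h -> asymp (fun x => C * g x + w x) d h.
Proof.
  intros Hw Hg.
  apply (negligible_germ (fun x => C * g x + (w x - d * h x)) h); [| |exists 0; auto].
  - apply negligible_add; [apply negligible_scale|]; auto.
  - apply germ_ext; intros; ring.
Qed.

Lemma asymp_tends (v h : R -> R) (c : R) :
  asymp v c h -> 0 < c -> tends_to_pinfty h -> tends_to_pinfty v.
Proof.
  intros Hv Hc Hh B.
  apply (ev_mono3 _ _ _ _ (Hv (c / 2) ltac:(lra)) (Hh (2 * B / c)) (tends_pos h Hh)).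
  intros x H1 H2 H3; pose proof (Rle_abs (- (v x - c * h x))) as Hv'.
  rewrite Rabs_Ropp in Hv'.
  assert (c / 2 * (2 * B / c) < c / 2 * h x) by (apply Rmult_lt_compat_l; lra).
  replace (c / 2 * (2 * B / c)) with B in * by (field; lra); lra.
Qed.

Definition comparable (f g : R -> R) : Prop :=
  germ_eq f g \/ negligible f g \/ negligible g f.

Definition pairwise_comparable (P : (R -> R) -> Prop) : Prop :=
  forall g1 g2, P g1 -> P g2 -> comparable g1 g2.

Definition has_leading_term (P : (R -> R) -> Prop) (v : R -> R) : Prop :=
  exists h c, P h /\ c <> 0 /\ asymp v c h.

Lemma has_leading_term_germ (P : (R -> R) -> Prop) (v v' : R -> R) :
  has_leading_term P v -> germ_eq v v' -> has_leading_term P v'.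
Proof. intros (h & c & Hh & Hc & H) E; exists h, c; eauto using asymp_germ. Qed.

(* Adding a multiple of [g] to a combination [w] of members of [P] not germ-equal
   to [g]: either the sum vanishes, or [C g] or the leading term of [w] leads. *)
Lemma leading_term_step (P : (R -> R) -> Prop) (g w : R -> R) (C : R) :
  (forall p, P p -> eventually (fun x => 0 < p x)) -> pairwise_comparable P -> P g ->
  eventually (fun x => w x = 0) \/ has_leading_term (fun p => P p /\ ~ germ_eq p g) w ->
  eventually (fun x => C * g x + w x = 0) \/ has_leading_term P (fun x => C * g x + w x).
Proof.
  intros Hpos Hcmp Hg Hw.
  destruct (Req_dec C 0) as [->|HC].
  - destruct Hw as [Hz|(h & d & [Hh _] & Hd & Hl)].
    + left; apply (ev_mono _ _ Hz); intros x ->; ring.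
    + right; exists h, d; repeat split; auto.
      apply (asymp_germ _ _ _ _ Hl), germ_ext; intros; ring.
  - right.
    assert (Hcases : negligible w g \/
                     exists h d, P h /\ d <> 0 /\ asymp w d h /\ negligible g h).
    { destruct Hw as [Hz|(h & d & [Hh Hhg] & Hd & Hl)].
      - left; apply negligible_zero; auto.
      - destruct (Hcmp h g Hh Hg) as [E|[Hs|Hs]]; [contradiction| |].
        + left; apply (asymp_negligible _ _ _ _ Hl Hs).
        + right; exists h, d; auto. }
    destruct Hcases as [Hn|(h & d & Hh & Hd & Hl & Hs)].
    + exists g, C; repeat split; auto using asymp_dominant.
    + exists h, d; repeat split; auto using asymp_add_negligible.
Qed.

(* Terms germ-equal to the
   first one are collected, and induction runs on the number of remaining terms. *)
Lemma leading_term (n : nat) : forall (P : (R -> R) -> Prop) (v : R -> R),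
  (forall p, P p -> eventually (fun x => 0 < p x)) -> pairwise_comparable P ->
  lincomb P n v -> eventually (fun x => v x = 0) \/ has_leading_term P v.
Proof.
  induction n as [n IH] using lt_wf_ind.
  destruct n as [|n]; simpl; [auto|].
  intros P v Hpos Hcmp (g & c & w & Hg & Hw & He).
  destruct (lincomb_isolate _ _ g _ Hw) as (a & m & w' & Hm & Hw' & Hwe).
  assert (Hv : germ_eq (fun x => (c + a) * g x + w' x) v).
  { apply (ev_mono2 _ _ _ He Hwe); intros x -> ->; ring. }
  assert (Hrest := IH m ltac:(lia) (fun p => P p /\ ~ germ_eq p g) w'
                     ltac:(intros p [Hp _]; auto)
                     ltac:(intros p q [Hp _] [Hq _]; auto) Hw').
  destruct (leading_term_step P g w' (c + a) Hpos Hcmp Hg Hrest) as [Hz|Hl].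
  - left; apply (ev_mono2 _ _ _ Hz Hv); intros x Hx <-; auto.
  - right; apply (has_leading_term_germ _ _ _ Hl Hv).
Qed.

Definition vanishes_or_diverges (v : R -> R) : Prop :=
  eventually (fun x => v x = 0) \/
  tends_to_pinfty v \/ tends_to_pinfty (fun x => - v x).

Lemma lincomb_vanishes_or_diverges (P : (R -> R) -> Prop) (n : nat) (v : R -> R) :
  (forall p, P p -> tends_to_pinfty p) -> pairwise_comparable P ->
  lincomb P n v -> vanishes_or_diverges v.
Proof.
  intros Ht Hcmp Hv.
  destruct (leading_term n P v (fun p Hp => tends_pos p (Ht p Hp)) Hcmp Hv)
    as [Hz|(h & c & Hh & Hc & Hl)]; [left; auto|right].
  destruct (Rlt_or_le 0 c) as [Hc0|Hc0].
  - left; apply (asymp_tends _ _ _ Hl Hc0 (Ht h Hh)).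
  - right; apply (asymp_tends _ h (- c)); [|lra|auto].
    apply (negligible_germ _ _ _ _ (negligible_scale (-1) _ _ Hl)); [|exists 0; auto].
    apply germ_ext; intros; ring.
Qed.

Lemma negligible_of_log_gap (f g : R -> R) :
  eventually (fun x => 0 < f x) -> eventually (fun x => 0 < g x) ->
  tends_to_pinfty (fun x => ln (f x) - ln (g x)) -> negligible g f.
Proof.
  intros Hf Hg Hgap eps He.
  apply (ev_mono3 _ _ _ _ (Hgap (- ln eps)) Hf Hg); intros x Hx Hfx Hgx.
  rewrite Rabs_pos_eq by lra; apply Rlt_le, ln_lt_inv; [lra|nra|].
  rewrite ln_mult by auto; lra.
Qed.

Lemma comparable_by_log (f g : R -> R) :
  eventually (fun x => 0 < f x) -> eventually (fun x => 0 < g x) ->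
  vanishes_or_diverges (fun x => ln (f x) - ln (g x)) -> comparable f g.
Proof.
  intros Hf Hg [Hz|[Ht|Ht]].
  - left; apply (ev_mono3 _ _ _ _ Hz Hf Hg); intros x Hx Hfx Hgx.
    rewrite <- (exp_ln (f x)), <- (exp_ln (g x)) by auto; f_equal; lra.
  - right; right; apply negligible_of_log_gap; auto.
  - right; left; apply negligible_of_log_gap; auto.
    apply (tends_ext _ _ Ht); intros; ring.
Qed.

(** * The levels of the hierarchy *)

Fixpoint level (n : nat) (g : R -> R) : Prop :=
  match n with
  | O => exists k, germ_eq g (iter_ln k)
  | S n' => tends_to_pinfty g /\ exists m, lincomb (level n') m (fun x => ln (g x))
  end.

Lemma level_tends (n : nat) (g : R -> R) : level n g -> tends_to_pinfty g.
Proof.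
  destruct n as [|n]; simpl.
  - intros [k Hk]; apply (tends_germ _ _ (iter_ln_tends k)), germ_sym; auto.
  - intros [H _]; auto.
Qed.

Lemma level_germ (n : nat) (f g : R -> R) : level n f -> germ_eq f g -> level n g.
Proof.
  destruct n as [|n]; simpl.
  - intros [k Hk] E; exists k; apply (germ_trans _ f); auto using germ_sym.
  - intros [Ht [m Hm]] E; split; [apply (tends_germ f); auto|].
    exists m; apply (lincomb_germ _ _ _ _ Hm), (ev_mono _ _ E); intros x ->; auto.
Qed.

Lemma level_succ (n : nat) (g : R -> R) : level n g -> level (S n) g.
Proof.
  revert g; induction n as [|n IH]; intros g Hg.
  - split; [apply (level_tends 0); auto|].
    destruct Hg as [k Hk]; exists 1%nat.
    apply (lincomb_germ _ _ (iter_ln (S k))).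
    + apply lincomb_single; exists (S k); exists 0; auto.
    + apply (ev_mono _ _ Hk); intros x ->; auto.
  - destruct Hg as [Ht [m Hm]]; split; auto.
    exists m; apply (lincomb_mono (level n)); auto.
Qed.

Lemma level_mono (n m : nat) (g : R -> R) : (n <= m)%nat -> level n g -> level m g.
Proof. induction 1; auto using level_succ. Qed.

Lemma level_common (n1 n2 : nat) (f g : R -> R) : level n1 f -> level n2 g ->
  exists n, level (S n) f /\ level (S n) g.
Proof.
  intros Hf Hg; exists (Nat.max n1 n2); split;
    [apply (level_mono n1) | apply (level_mono n2)]; auto; lia.
Qed.

Lemma level0_pairwise_comparable : pairwise_comparable (level 0).
Proof.
  intros g1 g2 [j H1] [k H2].
  destruct (Nat.lt_total j k) as [Hjk|[<-|Hkj]].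
  - right; right; apply (negligible_germ _ _ _ _ (iter_ln_negligible _ _ Hjk));
      apply germ_sym; auto.
  - left; apply (germ_trans _ (iter_ln j)); auto using germ_sym.
  - right; left; apply (negligible_germ _ _ _ _ (iter_ln_negligible _ _ Hkj));
      apply germ_sym; auto.
Qed.

(* The logarithms of two level-[n+1] functions differ by a combination of level-[n]
   functions, which vanishes or diverges when level [n] is pairwise comparable. *)
Lemma level_pairwise_comparable (n : nat) : pairwise_comparable (level n).
Proof.
  induction n as [|n IH]; [apply level0_pairwise_comparable|].
  intros f g Hf Hg.
  pose proof (level_tends _ _ Hf) as Tf; pose proof (level_tends _ _ Hg) as Tg.
  destruct Hf as [_ [m1 Hm1]], Hg as [_ [m2 Hm2]].
  apply comparable_by_log; auto using tends_pos.
  apply (lincomb_vanishes_or_diverges (level n) (m1 + m2)); [apply level_tends|auto|].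
  refine (lincomb_germ _ _ _ _ (lincomb_combine _ _ _ _ _ 1 (-1) Hm1 Hm2) _).
  exists 0; intros; ring.
Qed.

Lemma level_exp (n : nat) (f : R -> R) : level n f -> level (S n) (fun x => exp (f x)).
Proof.
  intros Hf; split; [apply tends_exp, (level_tends n); auto|].
  exists 1%nat; apply (lincomb_germ _ _ f); [apply lincomb_single; auto|].
  exists 0; intros; rewrite ln_exp; auto.
Qed.

Lemma level_log_combination (n : nat) (f g h : R -> R) (a b : R) :
  level (S n) f -> level (S n) g -> tends_to_pinfty h ->
  eventually (fun x => ln (h x) = a * ln (f x) + b * ln (g x)) -> level (S n) h.
Proof.
  intros [_ [m1 Hm1]] [_ [m2 Hm2]] Ht E; split; auto.
  exists (m1 + m2)%nat.
  refine (lincomb_germ _ _ _ _ (lincomb_combine _ _ _ _ _ a b Hm1 Hm2) _).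
  apply (ev_mono _ _ E); intros x ->; auto.
Qed.

Lemma inH_level (f : R -> R) : inH f -> exists n, level n f.
Proof.
  induction 1 as [f g _ [n Hf] E | k | f _ [n Hf] | f a _ [n Hf] _ Ha
                 | f g _ [n1 Hf] _ [n2 Hg] _ | f g _ [n1 Hf] _ [n2 Hg] Ht].
  - exists n; apply (level_germ _ _ _ Hf E).
  - exists 0%nat; exists k; exists 0; auto.
  - exists (S n); apply level_exp; auto.
  - exists (S n); apply (level_log_combination n f f _ a 0); auto using level_succ.
    + apply tends_Rpower, (level_tends n); auto.
    + exists 0; intros; rewrite ln_Rpower; ring.
  - destruct (level_common _ _ _ _ Hf Hg) as (n & Hf' & Hg'); exists (S n).
    apply (level_log_combination n f g _ 1 1); auto.
    + apply tends_mul; apply (level_tends (S n)); auto.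
    + apply (ev_mono2 _ _ _ (tends_pos _ (level_tends _ _ Hf'))
                            (tends_pos _ (level_tends _ _ Hg'))).
      intros x Hfx Hgx; rewrite ln_mult by auto; ring.
  - destruct (level_common _ _ _ _ Hf Hg) as (n & Hf' & Hg'); exists (S n).
    apply (level_log_combination n f g _ 1 (-1)); auto.
    apply (ev_mono2 _ _ _ (tends_pos _ (level_tends _ _ Hf'))
                          (tends_pos _ (level_tends _ _ Hg'))).
    intros x Hfx Hgx; unfold Rdiv.
    rewrite ln_mult, ln_Rinv by auto using Rinv_0_lt_compat; ring.
Qed.

Theorem mainTheorem3 (f g : R -> R) :
  inH f -> inH g -> ~ germ_eq f g ->
  ~ (exists M : R, 0 < M /\
       eventually (fun x => Rabs (f x) <= M * Rabs (g x) /\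
                            Rabs (g x) <= M * Rabs (f x))).
Proof.
  intros Hf Hg Hne [M [HM Hb]].
  destruct (inH_level f Hf) as [n1 Lf], (inH_level g Hg) as [n2 Lg].
  destruct (level_common _ _ _ _ Lf Lg) as (n & Lf' & Lg').
  pose proof (tends_pos _ (level_tends _ _ Lf')) as Pf.
  pose proof (tends_pos _ (level_tends _ _ Lg')) as Pg.
  destruct (level_pairwise_comparable (S n) f g Lf' Lg') as [E|[Hs|Hs]].
  - contradiction.
  - apply (negligible_not_bounded f g M HM Hs Pg), (ev_mono _ _ Hb); tauto.
  - apply (negligible_not_bounded g f M HM Hs Pf), (ev_mono _ _ Hb); tauto.
Qed.
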